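(* Let $f\in\mathcal S_\mu^1$ with $\mu\geqslant0$ and let $x^*$ be a global minimizer of $f$. Let $\gamma_0>0$, $x_0,v_0\in V$, and let $(\alpha_k)_{k\geqslant0}$ be arbitrary positive step sizes. Let sequences $(x_k,v_k,\gamma_k)$ satisfy, for all $k\geqslant0$, \[ \frac{x_{k+1}-x_k}{\alpha_k}=v_k-x_{k+1}-\beta_k\nabla f(x_{k+1}),\quad \frac{v_{k+1}-v_k}{\alpha_k}=\frac{\mu}{\gamma_k}(x_{k+1}-v_{k+1})-\frac1{\gamma_k}\nabla f(x_{k+1}),\quad \frac{\gamma_{k+1}-\gamma_k}{\alpha_k}=\mu-\gamma_{k+1}, \] where $\beta_k=\alpha_k/\gamma_k$. Define $\lambda_0=1$, $\lambda_k=\prod_{i=0}^{k-1}(1+\alpha_i)^{-1}$, $\mathcal L_k=f(x_k)-f(x^* )+\frac{\gamma_k}{2}\|v_k-x^*\|^2$, $\mathcal R_0=0$, $\mathcal R_k=\frac{\lambda_k}{2}\sum_{i=0}^{k-1}\frac{\alpha_i\beta_i}{\lambda_i}\|\nabla f(x_{i+1})\|^2$ for $k\geqslant1$, and $\mathcal E_k=\mathcal L_k+\mathcal R_k$. Then $\mathcal E_{k+1}\leqslant\mathcal E_k/(1+\alpha_k)$ for all $k\geqslant0$, and consequently, for all $k\geqslant0$, \[ \mathcal L_k+\frac{\lambda_k}{2}\sum_{i=0}^{k-1}\frac{\alpha_i^2}{\lambda_i\gamma_i}\|\nabla f(x_{i+1})\|^2\leqslant\lambda_k\mathcal L_0 .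 \]
   Context: $V$ is a real Hilbert space with inner product $(\cdot,\cdot)$ and norm $\|\cdot\|$; $V^*$ is identified with $V$. For $\mu\geqslant0$, $f$ is $\mu$-convex if $f(x)-f(y)-(p,x-y)\geqslant\frac{\mu}{2}\|x-y\|^2$ for all $x,y\in V$ and all $p\in\partial f(y)$ (subdifferential). $\mathcal S_\mu^1$ is the set of continuously differentiable $\mu$-convex functions on $V$. *)

From Stdlib Require Import Reals Lra.
Open Scope R_scope.

Record HilbertSpace := {
  carrier :> Type;
  vzero : carrier;
  vadd : carrier -> carrier -> carrier;
  vopp : carrier -> carrier;
  vscal : R -> carrier -> carrier;
  inner : carrier -> carrier -> R;
  vadd_assoc : forall x y z, vadd x (vadd y z) = vadd (vadd x y) z;
  vadd_comm : forall x y, vadd x y = vadd y x;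
  vadd_0 : forall x, vadd x vzero = x;
  vadd_opp : forall x, vadd x (vopp x) = vzero;
  vscal_1 : forall x, vscal 1 x = x;
  vscal_assoc : forall a b x, vscal a (vscal b x) = vscal (a * b) x;
  vscal_distr_v : forall a x y, vscal a (vadd x y) = vadd (vscal a x) (vscal a y);
  vscal_distr_s : forall a b x, vscal (a + b) x = vadd (vscal a x) (vscal b x);
  inner_sym : forall x y, inner x y = inner y x;
  inner_add_l : forall x y z, inner (vadd x y) z = inner x z + inner y z;
  inner_scal_l : forall a x y, inner (vscal a x) y = a * inner x y;
  inner_pos : forall x, 0 <= inner x x;
  inner_def : forall x, inner x x = 0 -> x = vzero;
  complete : forall u : nat -> carrier,
    (forall eps, 0 < eps -> exists N, forall m n, (N <= m)%nat -> (N <= n)%nat ->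
        sqrt (inner (vadd (u m) (vopp (u n))) (vadd (u m) (vopp (u n)))) < eps) ->
    exists l, forall eps, 0 < eps -> exists N, forall n, (N <= n)%nat ->
        sqrt (inner (vadd (u n) (vopp l)) (vadd (u n) (vopp l))) < eps
}.

Arguments vzero {h}.
Arguments vadd {h}.
Arguments vopp {h}.
Arguments vscal {h}.
Arguments inner {h}.

Definition vsub {V : HilbertSpace} (x y : V) : V := vadd x (vopp y).
Definition vnorm {V : HilbertSpace} (x : V) : R := sqrt (inner x x).

Definition has_gradient {V : HilbertSpace} (f : V -> R) (g x : V) : Prop :=
  forall eps, 0 < eps -> exists delta, 0 < delta /\
    forall h : V, vnorm h < delta ->
      Rabs (f (vadd x h) - f x - inner g h) <= eps * vnorm h.

(* (Frechet / regular) subdifferential of f at y; for convex f it is the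
   usual convex subdifferential, for differentiable f it is {grad f y}. *)
Definition subdiff {V : HilbertSpace} (f : V -> R) (y p : V) : Prop :=
  forall eps, 0 < eps -> exists delta, 0 < delta /\
    forall h : V, vnorm h < delta ->
      f (vadd y h) - f y - inner p h >= - eps * vnorm h.

Definition mu_convex {V : HilbertSpace} (mu : R) (f : V -> R) : Prop :=
  forall x y p : V, subdiff f y p ->
    f x - f y - inner p (vsub x y) >= mu / 2 * (vnorm (vsub x y))^2.

Definition in_S1 {V : HilbertSpace} (mu : R) (f : V -> R) (gradf : V -> V) : Prop :=
  (forall x, has_gradient f (gradf x) x) /\
  (forall x eps, 0 < eps -> exists delta, 0 < delta /\
     forall y, vnorm (vsub y x) < delta -> vnorm (vsub (gradf y) (gradf x)) < eps) /\
  mu_convex mu f.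

Fixpoint sumR (n : nat) (F : nat -> R) : R :=
  match n with O => 0 | S n' => sumR n' F + F n' end.

Fixpoint lambda (alpha : nat -> R) (k : nat) : R :=
  match k with O => 1 | S k' => lambda alpha k' / (1 + alpha k') end.

(* The one-step estimate behind the Lyapunov decay is a sum of three facts:
   the mu-convexity of f at the new iterate x' (tested against x and xstar), the
   explicit form of the x-update, and the convexity of the squared norm,
   |g p + m q|^2 <= (g + m) (g |p|^2 + m |q|^2), applied to the v-update,
   which writes (g + a mu) (v' - xstar) as a weighted mean of
   v - xstar - (a/g) grad f(x') and x' - xstar.  Iterating the contraction
   E_{k+1} <= E_k / (1 + alpha_k) then gives E_k <= lambda_k E_0 = lambda_k L_0. *)

From Stdlib Require Import Reals Lra.
Open Scope R_scope.

Section HilbertAlgebra.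
Variable V : HilbertSpace.

Lemma inner_zero_l (c : V) : inner vzero c = 0.
Proof.
  pose proof (inner_add_l V vzero vzero c) as H.
  rewrite vadd_0 in H. lra.
Qed.

Lemma inner_opp_l (a c : V) : inner (vopp a) c = - inner a c.
Proof.
  pose proof (inner_add_l V a (vopp a) c) as H.
  rewrite vadd_opp, inner_zero_l in H. lra.
Qed.

Lemma inner_sub_l (a b c : V) : inner (vsub a b) c = inner a c - inner b c.
Proof. unfold vsub. rewrite inner_add_l, inner_opp_l. ring. Qed.

Lemma inner_sub_r (a b c : V) : inner c (vsub a b) = inner c a - inner c b.
Proof. rewrite !(inner_sym V c). apply inner_sub_l. Qed.

Lemma inner_add_r (a b c : V) : inner c (vadd a b) = inner c a + inner c b.
Proof. rewrite !(inner_sym V c). apply inner_add_l. Qed.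

Lemma inner_scal_r (s : R) (a c : V) : inner c (vscal s a) = s * inner c a.
Proof. rewrite !(inner_sym V c). apply inner_scal_l. Qed.

Lemma vnorm_sqr (a : V) : vnorm a ^ 2 = inner a a.
Proof. unfold vnorm. apply pow2_sqrt, inner_pos. Qed.

Lemma vnorm_sub_comm (a b : V) : vnorm (vsub a b) = vnorm (vsub b a).
Proof.
  unfold vnorm. f_equal.
  rewrite !inner_sub_l, !inner_sub_r, (inner_sym V a b). ring.
Qed.

Ltac inner_expand :=
  repeat rewrite ?inner_sub_l, ?inner_sub_r, ?inner_add_l, ?inner_add_r,
    ?(inner_scal_l V), ?inner_scal_r in *.

Lemma inner_ext (a b : V) : (forall z, inner a z = inner b z) -> a = b.
Proof.
  intros H.
  assert (Hab : vsub a b = vzero).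
  { apply inner_def. rewrite inner_sub_l, !H. ring. }
  unfold vsub in Hab.
  rewrite <- (vadd_0 V a), <- (vadd_opp V b), (vadd_comm V b), vadd_assoc, Hab.
  rewrite vadd_comm. apply vadd_0.
Qed.

Lemma vscal_inv_eq (a : R) (u w : V) : a <> 0 -> vscal (/ a) u = w -> u = vscal a w.
Proof.
  intros Ha <-. rewrite vscal_assoc, Rinv_r, vscal_1 by exact Ha. reflexivity.
Qed.

Lemma has_gradient_subdiff (f : V -> R) (g y : V) : has_gradient f g y -> subdiff f y g.
Proof.
  intros H eps Heps. destruct (H eps Heps) as [d [Hd Hh]].
  exists d; split; [exact Hd|]. intros h Hn. specialize (Hh h Hn).
  pose proof (Rle_abs (- (f (vadd y h) - f y - inner g h))) as A.
  rewrite Rabs_Ropp in A. lra.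
Qed.

Lemma mu_convex_gradient (mu : R) (f : V -> R) (G y x : V) :
  mu_convex mu f -> has_gradient f G y ->
  f y + inner G (vsub x y) + mu / 2 * vnorm (vsub x y) ^ 2 <= f x.
Proof.
  intros Hconv Hgrad. pose proof (Hconv x y G (has_gradient_subdiff f G y Hgrad)). lra.
Qed.

Lemma norm_sqr_weighted_mean (g m : R) (d p q : V) :
  0 <= g -> 0 <= m -> 0 < g + m ->
  vscal (g + m) d = vadd (vscal g p) (vscal m q) ->
  (g + m) * vnorm d ^ 2 <= g * vnorm p ^ 2 + m * vnorm q ^ 2.
Proof.
  intros Hg Hm Hs E.
  assert (Hz : forall z, (g + m) * inner d z = g * inner p z + m * inner q z).
  { intro z. rewrite <- (inner_scal_l V), E. inner_expand. ring. }
  pose proof (Hz d) as Hd. pose proof (Hz p) as Hp. pose proof (Hz q) as Hq.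
  assert (Hpq : 0 <= g * m * inner (vsub p q) (vsub p q)).
  { apply Rmult_le_pos; [nra | apply inner_pos]. }
  rewrite !vnorm_sqr. inner_expand.
  rewrite (inner_sym V d p), (inner_sym V d q), (inner_sym V q p) in *.
  apply (Rmult_le_reg_l (g + m)); [exact Hs|].
  rewrite Hd.
  replace ((g + m) * (g * inner p d + m * inner q d))
    with (g * ((g + m) * inner p d) + m * ((g + m) * inner q d)) by ring.
  rewrite Hp, Hq. lra.
Qed.

Lemma eq_of_scaled_eq (l r hl hr c : R) : hl = hr -> l - r = c * (hl - hr) -> l = r.
Proof. intros -> E. ring_simplify in E. lra. Qed.

Lemma gamma_update_solved (a mu g g' : R) :
  0 < a -> (g' - g) / a = mu - g' -> (1 + a) * g' = g + a * mu.
Proof.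
  intros Ha E. assert (g' - g = a * (mu - g')) by (rewrite <- E; field; lra). lra.
Qed.

Lemma lyapunov_step (mu : R) (f : V -> R) (xs : V) (a g g' : R) (x x' v v' G : V) :
  0 <= mu -> mu_convex mu f -> has_gradient f G x' -> 0 < g -> 0 < a ->
  vscal (/ a) (vsub x' x) = vsub (vsub v x') (vscal (a / g) G) ->
  vscal (/ a) (vsub v' v) = vsub (vscal (mu / g) (vsub x' v')) (vscal (/ g) G) ->
  (g' - g) / a = mu - g' ->
  (1 + a) * (f x' - f xs + g' / 2 * vnorm (vsub v' xs) ^ 2) + a * (a / g) / 2 * vnorm G ^ 2
    <= f x - f xs + g / 2 * vnorm (vsub v xs) ^ 2.
Proof.
  intros Hmu Hconv Hgrad Hg Ha Ex Ev Eg.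
  apply vscal_inv_eq in Ex, Ev; try lra.
  set (pt := vsub (vsub v xs) (vscal (a / g) G)).
  assert (Hmean : vscal (g + a * mu) (vsub v' xs) = vadd (vscal g pt) (vscal (a * mu) (vsub x' xs))).
  { apply inner_ext. intro z. pose proof (f_equal (fun u => inner u z) Ev) as Hz.
    unfold pt. cbv beta in Hz. inner_expand.
    apply (eq_of_scaled_eq _ _ _ _ g Hz). field. lra. }
  pose proof (norm_sqr_weighted_mean g (a * mu) _ _ _ ltac:(lra) ltac:(nra) ltac:(nra) Hmean) as J.
  assert (Hpt : g * vnorm pt ^ 2
                = g * vnorm (vsub v xs) ^ 2 - 2 * a * (inner G v - inner G xs) + a * (a / g) * vnorm G ^ 2).
  { unfold pt. rewrite !vnorm_sqr. inner_expand.
    rewrite (inner_sym V v G), (inner_sym V xs G). field. lra. }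
  assert (Hx : inner G x' - inner G x = a * (inner G v - inner G x') - a * (a / g) * vnorm G ^ 2).
  { rewrite <- !inner_sub_r, Ex, vnorm_sqr. inner_expand. ring. }
  pose proof (mu_convex_gradient mu f G x' x Hconv Hgrad) as Cx.
  pose proof (mu_convex_gradient mu f G x' xs Hconv Hgrad) as Cxs.
  rewrite vnorm_sub_comm in Cxs. inner_expand.
  assert (Hmu_x : 0 <= mu / 2 * vnorm (vsub x x') ^ 2) by (apply Rmult_le_pos; [lra | apply pow2_ge_0]).
  assert (aCxs : a * (f x' + (inner G xs - inner G x') + mu / 2 * vnorm (vsub x' xs) ^ 2) <= a * f xs)
    by (apply Rmult_le_compat_l; lra).
  assert (Hv' : (1 + a) * g' * vnorm (vsub v' xs) ^ 2 = (g + a * mu) * vnorm (vsub v' xs) ^ 2)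
    by (rewrite (gamma_update_solved a mu g g'); auto).
  (* Cx + aCxs + J / 2, once Hpt, Hx and Hv' are substituted. *)
  lra.
Qed.

End HilbertAlgebra.

Lemma gamma_pos (mu : R) (alpha gamma : nat -> R) :
  0 <= mu -> 0 < gamma 0%nat -> (forall k, 0 < alpha k) ->
  (forall k, (gamma (S k) - gamma k) / alpha k = mu - gamma (S k)) ->
  forall k, 0 < gamma k.
Proof.
  intros Hmu Hg0 Ha Eg. induction k as [|k IH]; [exact Hg0|].
  pose proof (gamma_update_solved _ _ _ _ (Ha k) (Eg k)). pose proof (Ha k). nra.
Qed.

Lemma lambda_pos (alpha : nat -> R) : (forall k, 0 < alpha k) -> forall k, 0 < lambda alpha k.
Proof.
  intros Ha. induction k as [|k IH]; simpl; [lra|].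
  apply Rdiv_lt_0_compat; [exact IH | pose proof (Ha k); lra].
Qed.

Lemma lambda_sumR_S (alpha t : nat -> R) (k : nat) : 0 < alpha k ->
  (1 + alpha k) * (lambda alpha (S k) / 2 * sumR (S k) t)
  = lambda alpha k / 2 * sumR k t + lambda alpha k / 2 * t k.
Proof. intros Ha. simpl. field. lra. Qed.

Lemma sumR_ext (n : nat) (F G : nat -> R) : (forall i, F i = G i) -> sumR n F = sumR n G.
Proof. intros H. induction n as [|n IH]; simpl; [reflexivity|]. rewrite IH, H. reflexivity. Qed.

Lemma le_lambda_mul_of_contraction (alpha E : nat -> R) :
  (forall k, 0 < alpha k) -> (forall k, E (S k) <= E k / (1 + alpha k)) ->
  forall k, E k <= lambda alpha k * E 0%nat.
Proof.
  intros Ha Hc. induction k as [|k IH]; simpl; [lra|].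
  apply (Rle_trans _ _ _ (Hc k)). pose proof (Ha k).
  replace (lambda alpha k / (1 + alpha k) * E 0%nat) with (lambda alpha k * E 0%nat / (1 + alpha k))
    by (field; lra).
  apply Rmult_le_compat_r; [left; apply Rinv_0_lt_compat; lra | exact IH].
Qed.

Theorem theorem3p1 (V : HilbertSpace) (mu : R) (f : V -> R) (gradf : V -> V)
  (xstar : V) (alpha gamma : nat -> R) (x v : nat -> V) :
  0 <= mu ->
  in_S1 mu f gradf ->
  (forall y : V, f xstar <= f y) ->
  0 < gamma 0%nat ->
  (forall k, 0 < alpha k) ->
  (forall k,
     vscal (/ alpha k) (vsub (x (S k)) (x k)) =
       vsub (vsub (v k) (x (S k))) (vscal (alpha k / gamma k) (gradf (x (S k))))) ->
  (forall k,
     vscal (/ alpha k) (vsub (v (S k)) (v k)) =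
       vsub (vscal (mu / gamma k) (vsub (x (S k)) (v (S k))))
            (vscal (/ gamma k) (gradf (x (S k))))) ->
  (forall k, (gamma (S k) - gamma k) / alpha k = mu - gamma (S k)) ->
  let beta := fun k => alpha k / gamma k in
  let L := fun k => f (x k) - f xstar + gamma k / 2 * (vnorm (vsub (v k) xstar))^2 in
  let Rk := fun k => lambda alpha k / 2 *
       sumR k (fun i => alpha i * beta i / lambda alpha i * (vnorm (gradf (x (S i))))^2) in
  let E := fun k => L k + Rk k in
  (forall k, E (S k) <= E k / (1 + alpha k)) /\
  (forall k, L k + lambda alpha k / 2 *
       sumR k (fun i => alpha i ^ 2 / (lambda alpha i * gamma i) * (vnorm (gradf (x (S i))))^2)
     <= lambda alpha k * L 0%nat).
Proof.
  intros Hmu [Hgrad [_ Hconv]] _ Hg0 Ha Ex Ev Eg beta L Rk E.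
  pose proof (gamma_pos mu alpha gamma Hmu Hg0 Ha Eg) as Hg.
  pose proof (lambda_pos alpha Ha) as Hl.
  assert (Hdecay : forall k, E (S k) <= E k / (1 + alpha k)).
  { intro k. pose proof (Ha k). pose proof (Hg k). pose proof (Hl k).
    pose proof (lyapunov_step V mu f xstar _ _ _ _ _ _ _ _
                  Hmu Hconv (Hgrad _) (Hg k) (Ha k) (Ex k) (Ev k) (Eg k)) as Hstep.
    apply (Rmult_le_reg_l (1 + alpha k)); [lra|].
    replace ((1 + alpha k) * (E k / (1 + alpha k))) with (E k) by (field; lra).
    unfold E, Rk. rewrite Rmult_plus_distr_l, lambda_sumR_S by exact (Ha k).
    unfold L, beta in *. cbv beta.
    replace (lambda alpha k / 2 * (alpha k * (alpha k / gamma k) / lambda alpha k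
               * vnorm (gradf (x (S k))) ^ 2))
      with (alpha k * (alpha k / gamma k) / 2 * vnorm (gradf (x (S k))) ^ 2) by (field; lra).
    lra. }
  split; [exact Hdecay|].
  intro k. pose proof (le_lambda_mul_of_contraction alpha E Ha Hdecay k) as Hk.
  unfold E, Rk in Hk. simpl in Hk. rewrite Rmult_0_r, Rplus_0_r in Hk.
  erewrite sumR_ext; [exact Hk|].
  intro i. unfold beta. pose proof (Hg i). pose proof (Hl i). field. lra.
Qed.
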